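(* Let $\epsilon,\delta,\tau>0$ and set $r_{max}=\frac{\epsilon\delta}{m\tau}$. For any source supernode $\mathcal V_i\in\mathcal S$, the procedure GFP$(G,\mathcal S,\mathcal V_i,r_{max})$ terminates, and its output $\hat\pi_d(\mathcal V_i,\mathcal V_j)$ is an $(\epsilon,\delta)$-approximation of $\pi_d(\mathcal V_i,\mathcal V_j)$ for every $\mathcal V_j\in\mathcal S$ with $\tau_j\le\tau$.
   Context: $G=(V,E)$ is a directed graph with $n$ nodes and $m$ edges, no self-loops, and every node of out-degree $d(v)\ge1$; $\alpha\in(0,1)$. PPR $\pi(u,v)$: probability that a random walk from $u$ which at each step stops with probability $\alpha$ and otherwise moves to a uniformly random out-neighbor stops at $v$; $\pi_d(u,v)=d(u)\pi(u,v)$. A collection $\mathcal S=\{\mathcal V_1,\dots,\mathcal V_k\}$ of supernodes is given, each $\mathcal V_i$ having a nonempty leaf set $F(\mathcal V_i)\subseteq V$, the leaf sets being pairwise disjoint. For supernodes, $\pi_d(\mathcal V_i,\mathcal V_j)=\frac{1}{|F(\mathcal V_i)||F(\mathcal V_j)|}\sum_{v_s\in F(\mathcal V_i),v_t\in F(\mathcal V_j)}\pi_d(v_s,v_t)$. The degree-normalized PageRank of $\mathcal V_j$ is $\tau_j=\frac{1}{m|F(\mathcal V_j)|}\sum_{v_t\in F(\mathcal V_j)}\sum_{v_k\in V}\pi_d(v_k,v_t)$. A value $\hat x$ is an $(\epsilon,\delta)$-approximation of $x\ge0$ if $|\hat x-x|\le\epsilon\delta$ when $x<\delta$, and $|\hat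 x-x|\le\epsilon x$ when $x\ge\delta$. Procedure GFP$(G,\mathcal S,\mathcal V_i,r_{max})$: set $\hat\pi_d(\mathcal V_i,\mathcal V_j)=0$ for all $\mathcal V_j\in\mathcal S$; set $r(\mathcal V_i,v)=d(v)/|F(\mathcal V_i)|$ for $v\in F(\mathcal V_i)$ and $0$ otherwise. While some $v_k\in V$ has $r(\mathcal V_i,v_k)>d(v_k)\,r_{max}$, pick any such $v_k$ and: if $v_k\in F(\mathcal V_j)$ for some $\mathcal V_j\in\mathcal S$, add $\alpha\,r(\mathcal V_i,v_k)/|F(\mathcal V_j)|$ to $\hat\pi_d(\mathcal V_i,\mathcal V_j)$; for each out-neighbor $v_j$ of $v_k$ add $(1-\alpha)\,r(\mathcal V_i,v_k)/d(v_k)$ to $r(\mathcal V_i,v_j)$; then set $r(\mathcal V_i,v_k)=0$. Output the values $\hat\pi_d(\mathcal V_i,\cdot)$. *)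

From HB Require Import structures.
From mathcomp Require Import all_boot all_order all_algebra.
From mathcomp Require Import all_classical all_reals all_analysis.
From Stdlib Require Import Relations.
Set Implicit Arguments. Unset Strict Implicit. Unset Printing Implicit Defensive.
Import Order.TTheory GRing.Theory Num.Theory numFieldNormedType.Exports.
Local Open Scope ring_scope.

Section Defs.
Variables (R : realType) (V : finType) (E : rel V) (alpha : R).

Definition outdeg (v : V) : nat := #|[set w | E v w]|.

Definition nedges : nat := #|[set p : V * V | E p.1 p.2]|.

Fixpoint walkp (t : nat) (u v : V) : R :=
  match t with
  | 0%N => (u == v)%:R
  | t'.+1 => \sum_(w | E u w) (outdeg u)%:R^-1 * walkp t' w v
  end.

(* PPR: probability that the alpha-terminating walk from u stops at v,
   i.e. sum over the stopping time t of alpha (1-alpha)^t P^t(u,v). *)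
Definition ppr (u v : V) : R :=
  limn (series (fun t => alpha * (1 - alpha) ^+ t * walkp t u v)).

Definition pprd (u v : V) : R := (outdeg u)%:R * ppr u v.

Variables (I : finType) (F : I -> {set V}).

Definition spprd (i j : I) : R :=
  (#|F i|%:R * #|F j|%:R)^-1 *
  \sum_(vs in F i) \sum_(vt in F j) pprd vs vt.

Definition spr (j : I) : R :=
  (nedges%:R * #|F j|%:R)^-1 * \sum_(vt in F j) \sum_(vk : V) pprd vk vt.

(* GFP state: estimates hat(pi_d)(V_i, .) and residues r(V_i, .) *)
Definition gfp_state := ((I -> R) * (V -> R))%type.

Definition gfp_init (i : I) : gfp_state :=
  (fun _ => 0, fun v => if v \in F i then (outdeg v)%:R / #|F i|%:R else 0).

Definition gfp_push (s : gfp_state) (vk : V) : gfp_state :=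
  let: (h, r) := s in
  (fun j => h j + (if vk \in F j then alpha * r vk / #|F j|%:R else 0),
   fun w => if w == vk then 0
            else r w + (if E vk w then (1 - alpha) * r vk / (outdeg vk)%:R else 0)).

Definition gfp_active (rmax : R) (s : gfp_state) (vk : V) : Prop :=
  s.2 vk > (outdeg vk)%:R * rmax.

Definition gfp_step (rmax : R) (s s' : gfp_state) : Prop :=
  exists vk, gfp_active rmax s vk /\ s' = gfp_push s vk.

(* GFP terminates from state s whatever choices are made:
   there is no infinite sequence of loop iterations *)
Definition gfp_terminates (rmax : R) (s : gfp_state) : Prop :=
  Acc (fun y x => gfp_step rmax x y) s.

Definition gfp_output (rmax : R) (i : I) (s : gfp_state) : Prop :=
  clos_refl_trans gfp_state (gfp_step rmax) (gfp_init i) s /\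
  (forall vk, ~ gfp_active rmax s vk).

End Defs.

Definition ed_approx (R : realType) (eps delta xh x : R) : Prop :=
  if x < delta then `|xh - x| <= eps * delta else `|xh - x| <= eps * x.

(* The residues r of GFP satisfy, for every target supernode j, the invariant
   pi_d(V_i, V_j) = hat(pi_d)(V_i, V_j) + sum_v r(v) Q_j(v), where Q_j(v) is the
   average PPR from v to the leaves of V_j: it holds initially by definition of
   pi_d and is preserved by a push because of the first-step equation
   pi(v, t) = alpha [v = t] + (1 - alpha)/d(v) sum_(v -> w) pi(w, t).
   Each push lowers the total residue by alpha r(v_k) > alpha r_max, so GFP
   terminates.  On exit r(v) <= d(v) r_max, hence the (one-sided) error is at most
   r_max sum_v d(v) Q_j(v) = r_max m tau_j <= eps delta tau_j / tau <= eps delta. *)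
From mathcomp Require Import all_boot all_order all_algebra.
From mathcomp Require Import all_classical all_reals all_analysis.
From mathcomp Require Import ring lra.
From Stdlib Require Import Relations.
Import Order.TTheory GRing.Theory Num.Theory numFieldNormedType.Exports.
Local Open Scope ring_scope.

Lemma ed_approx_of_bounds (R : realType) (eps delta xh x : R) :
  0 <= eps -> 0 <= x - xh <= eps * delta -> ed_approx eps delta xh x.
Proof.
move=> eps_ge0 /andP[err_ge0 err_le].
rewrite /ed_approx distrC ger0_norm //; case: ltP => // delta_le_x.
by rewrite (le_trans err_le) // ler_wpM2l.
Qed.

Section PPR.
Context {R : realType} {V : finType} {E : rel V}.

Lemma nedges_gt0 (v : V) : (0 < outdeg E v)%N -> (0 < nedges E)%N.
Proof.
move=> /card_gt0P[w]; rewrite inE => Evw.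
by apply/card_gt0P; exists (v, w); rewrite inE.
Qed.

Lemma sumr_out_const (u : V) (c : R) : \sum_(w | E u w) c = c *+ outdeg E u.
Proof. by rewrite sumr_const /outdeg cardsE. Qed.

Hypothesis outdeg_gt0 : forall v, (0 < outdeg E v)%N.

Lemma outdeg_neq0 (v : V) : (outdeg E v)%:R != 0 :> R.
Proof. by rewrite pnatr_eq0 -lt0n. Qed.

Lemma walkp_ge0 t (u v : V) : 0 <= walkp R E t u v.
Proof.
elim: t u => [|t IH] u /=; first exact: ler0n.
by apply: sumr_ge0 => w _; rewrite mulr_ge0 ?invr_ge0 ?ler0n.
Qed.

Lemma walkp_le1 t (u v : V) : walkp R E t u v <= 1.
Proof.
elim: t u => [|t IH] u /=; first by rewrite lern1 leq_b1.
apply: le_trans (_ : \sum_(w | E u w) (outdeg E u)%:R^-1 <= _).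
  by apply: ler_sum => w _; rewrite ler_piMr ?invr_ge0 ?ler0n.
by rewrite sumr_out_const -(mulr_natl (_^-1)) mulfV ?outdeg_neq0.
Qed.

Context {alpha : R}.
Hypothesis alpha01 : 0 < alpha < 1.

Definition ppr_term (u v : V) (t : nat) : R :=
  alpha * (1 - alpha) ^+ t * walkp R E t u v.

Lemma ppr_term_ge0 u v t : 0 <= ppr_term u v t.
Proof.
case/andP: alpha01 => alpha_gt0 alpha_lt1.
by rewrite /ppr_term !mulr_ge0 ?exprn_ge0 ?walkp_ge0 ?subr_ge0 // ltW.
Qed.

Lemma is_cvg_ppr_series u v : cvgn (series (ppr_term u v)).
Proof.
case/andP: alpha01 => alpha_gt0 alpha_lt1.
apply: nondecreasing_is_cvgn.
  move=> m n le_mn; rewrite /series /= (big_cat_nat (leq0n m) le_mn) /= lerDl.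
  by apply: sumr_ge0 => k _; exact: ppr_term_ge0.
exists 1 => _ [n _ <-].
apply: le_trans (_ : series (geometric alpha (1 - alpha)) n <= _).
  apply: ler_sum => k _; rewrite /ppr_term /geometric /= ler_piMr ?walkp_le1 //.
  by rewrite mulr_ge0 ?exprn_ge0 ?subr_ge0 // ltW.
apply: le_trans (geometric_le_lim _ _ _ _) _.
- exact: ltW.
- by rewrite subr_gt0.
- by rewrite ger0_norm ?subr_ge0 ?ltW // ltrBlDr ltrDl.
by rewrite opprB addrCA subrr addr0 divff // gt_eqF.
Qed.

Lemma series_ppr_termS u v n :
  series (ppr_term u v) n.+1 = alpha * (u == v)%:R +
  (1 - alpha) * (outdeg E u)%:R^-1 * \sum_(w | E u w) series (ppr_term w v) n.
Proof.
rewrite /series /= big_nat_recl // {1}/ppr_term /= expr0 mulr1; congr (_ + _).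
rewrite mulr_sumr (eq_bigr (fun w => \sum_(0 <= k < n)
  (1 - alpha) / (outdeg E u)%:R * ppr_term w v k)); last first.
  by move=> w _; rewrite mulr_sumr.
rewrite exchange_big /=; apply: eq_bigr => k _.
rewrite /ppr_term /= mulr_sumr; apply: eq_bigr => w _.
rewrite exprS; ring.
Qed.

Lemma ppr_rec u v : ppr E alpha u v = alpha * (u == v)%:R +
  (1 - alpha) * (outdeg E u)%:R^-1 * \sum_(w | E u w) ppr E alpha w v.
Proof.
apply: cvg_lim => //; rewrite -cvg_shiftS /=.
under eq_cvg do rewrite series_ppr_termS.
apply: cvgD; first exact: cvg_cst.
apply: cvgM; first exact: cvg_cst.
apply: cvg_big => // [|w _]; first exact: add_continuous.
exact: is_cvg_ppr_series.
Qed.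

Lemma ppr_ge0 u v : 0 <= ppr E alpha u v.
Proof.
apply: limr_ge; first exact: is_cvg_ppr_series.
by near=> n; apply: sumr_ge0 => k _; exact: ppr_term_ge0.
Unshelve. all: by end_near.
Qed.

End PPR.

Lemma sumr_eqb_in (R : pzRingType) (T : finType) (A : {set T}) (x : T) :
  \sum_(y in A) ((x == y)%:R : R) = (x \in A)%:R.
Proof.
case: (boolP (x \in A)) => [xA|xNA].
  rewrite (bigD1 x) //= eqxx big1 ?addr0 // => y /andP[_ /negbTE].
  by rewrite eq_sym => ->.
by apply: big1 => y yA; case: eqP => // xy; rewrite xy yA in xNA.
Qed.

Lemma clos_refl_trans_invariant (T : Type) (step : relation T) (P : T -> Prop) :
  (forall x y, P x -> step x y -> P y) ->
  forall x y, clos_refl_trans T step x y -> P x -> P y.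
Proof.
move=> stepP x y; elim=> [a b ab Pa | // | a b c _ IHab _ IHbc /IHab/IHbc //].
exact: stepP Pa ab.
Qed.

Section GFP.
Context {R : realType} {V : finType} {E : rel V} {alpha : R}.
Hypothesis outdeg_gt0 : forall v, (0 < outdeg E v)%N.
Hypothesis alpha01 : 0 < alpha < 1.
Hypothesis loopfree : forall v, ~~ E v v.
Context {I : finType} {F : I -> {set V}}.

Definition ppr_avg (j : I) (v : V) : R :=
  #|F j|%:R^-1 * \sum_(vt in F j) ppr E alpha v vt.

Lemma ppr_avg_ge0 j v : 0 <= ppr_avg j v.
Proof.
rewrite /ppr_avg mulr_ge0 ?invr_ge0 ?ler0n // sumr_ge0 // => vt _.
exact: ppr_ge0.
Qed.

Lemma ppr_avg_rec j vk : ppr_avg j vk = alpha * (vk \in F j)%:R / #|F j|%:R +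
  (1 - alpha) * (outdeg E vk)%:R^-1 * \sum_(w | E vk w) ppr_avg j w.
Proof.
rewrite /ppr_avg (eq_bigr _ (fun vt _ => ppr_rec outdeg_gt0 alpha01 vk vt)).
rewrite big_split /= -mulr_sumr sumr_eqb_in -mulr_sumr mulrDr; congr (_ + _).
  ring.
by rewrite exchange_big /= -mulr_sumr mulrCA mulr_sumr.
Qed.

Lemma gfp_push_residue_sum (s : gfp_state R V I) vk (g : V -> R) :
  \sum_v (gfp_push E alpha F s vk).2 v * g v =
  \sum_v s.2 v * g v - s.2 vk * g vk +
  (1 - alpha) * s.2 vk / (outdeg E vk)%:R * \sum_(v | E vk v) g v.
Proof.
case: s => h r /=; set c := (1 - alpha) * r vk / (outdeg E vk)%:R.
rewrite (eq_bigr (fun v => r v * g v - (if v == vk then r vk * g vk else 0)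
   + (if E vk v then c * g v else 0))); last first.
  move=> v _; case: eqP => [->|_]; first by rewrite (negbTE (loopfree vk)); ring.
  by case: (E vk v); ring.
by rewrite big_split sumrB /= -!big_mkcond big_pred1_eq /= mulr_sumr.
Qed.

(* Taking [g = 1]: a push keeps the fraction [1 - alpha] of the pushed residue. *)
Lemma gfp_push_residue_total (s : gfp_state R V I) vk :
  \sum_v (gfp_push E alpha F s vk).2 v = \sum_v s.2 v - alpha * s.2 vk.
Proof.
under eq_bigr do rewrite -[_.2 _]mulr1.
rewrite gfp_push_residue_sum sumr_out_const -mulr_natr mul1r.
under [X in _ = X - _]eq_bigr do rewrite -[s.2 _]mulr1.
by field; rewrite outdeg_neq0.
Qed.

Lemma gfp_push_residue_ge0 (s : gfp_state R V I) vk :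
  (forall v, 0 <= s.2 v) -> forall v, 0 <= (gfp_push E alpha F s vk).2 v.
Proof.
case: s => h r /= r_ge0 v; case: eqP => // _.
have alpha_le1 : 0 <= 1 - alpha by case/andP: alpha01 => _ /ltW; rewrite subr_ge0.
by rewrite addr_ge0 //; case: (E vk v) => //; rewrite divr_ge0 ?ler0n ?mulr_ge0.
Qed.

Definition gfp_invariant (i : I) (s : gfp_state R V I) : Prop :=
  (forall v, 0 <= s.2 v) /\
  forall j, spprd E alpha F i j = s.1 j + \sum_v s.2 v * ppr_avg j v.

Lemma gfp_invariant_init i : gfp_invariant i (gfp_init R E F i).
Proof.
split => [v|j] /=; first by case: ifP; rewrite ?divr_ge0 ?ler0n.
rewrite add0r /spprd.
rewrite [RHS](eq_bigr (fun v => if v \in F i then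
  (outdeg E v)%:R / #|F i|%:R * ppr_avg j v else 0)); last first.
  by move=> v _; case: ifP; rewrite ?mul0r.
rewrite -big_mkcond /= mulr_sumr; apply: eq_bigr => v _.
rewrite /ppr_avg /pprd -mulr_sumr invfM; ring.
Qed.

Lemma gfp_invariant_push i s vk :
  gfp_invariant i s -> gfp_invariant i (gfp_push E alpha F s vk).
Proof.
case=> r_ge0 spprdE; split; first exact: gfp_push_residue_ge0.
move=> j; rewrite gfp_push_residue_sum spprdE (ppr_avg_rec j vk).
by case: s {r_ge0 spprdE} => h r /=; case: (vk \in F j) => /=; ring.
Qed.

Lemma gfp_output_invariant rmax i s :
  gfp_output E alpha F rmax i s -> gfp_invariant i s.
Proof.
case=> reach _; apply: clos_refl_trans_invariant reach (gfp_invariant_init i).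
by move=> x y Ix [vk [_ ->]]; exact: gfp_invariant_push.
Qed.

(* The total residue is a potential that drops by more than [alpha * rmax] per step. *)
Lemma gfp_terminates_residue_ge0 rmax (s : gfp_state R V I) :
  0 < rmax -> (forall v, 0 <= s.2 v) -> gfp_terminates E alpha F rmax s.
Proof.
move=> rmax_gt0; case/andP: alpha01 => alpha_gt0 _.
have c_gt0 : 0 < alpha * rmax by rewrite mulr_gt0.
suff potential : forall n s, (forall v, 0 <= s.2 v) ->
    \sum_v s.2 v < n%:R * (alpha * rmax) -> gfp_terminates E alpha F rmax s.
  move=> r_ge0; apply: (potential (Num.Def.archi_bound
    ((\sum_v s.2 v) / (alpha * rmax)))) => //.
  rewrite -ltr_pdivrMr //; apply: archi_boundP.
  by rewrite divr_ge0 ?sumr_ge0 ?ltW.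
elim=> [|n IH] {}s r_ge0 sum_lt.
  by move: sum_lt; rewrite mul0r ltNge sumr_ge0.
constructor => _ [vk [active ->]]; apply: IH; first exact: gfp_push_residue_ge0.
rewrite gfp_push_residue_total.
have : rmax <= (outdeg E vk)%:R * rmax by rewrite ler_peMl ?ler1n // ltW.
move: sum_lt active; rewrite /gfp_active mulrSr; nra.
Qed.

Lemma gfp_output_error {rmax i s} :
  gfp_output E alpha F rmax i s -> forall j,
  0 <= spprd E alpha F i j - s.1 j <=
  rmax * \sum_v (outdeg E v)%:R * ppr_avg j v.
Proof.
move=> /[dup] /gfp_output_invariant[r_ge0 spprdE] out j.
have r_le v : s.2 v <= (outdeg E v)%:R * rmax.
  by rewrite leNgt; apply/negP => /out.2.
rewrite spprdE addrAC subrr add0r mulr_sumr.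
rewrite sumr_ge0 => [|v _]; last by rewrite mulr_ge0 ?ppr_avg_ge0.
by apply: ler_sum => v _; rewrite mulrA [rmax * _]mulrC ler_wpM2r ?ppr_avg_ge0.
Qed.

Lemma nedges_mul_spr j : (0 < nedges E)%N ->
  (nedges E)%:R * spr E alpha F j = \sum_v (outdeg E v)%:R * ppr_avg j v.
Proof.
move=> m_gt0; rewrite /spr invfM !mulrA mulfV ?mul1r ?pnatr_eq0 -?lt0n //.
rewrite exchange_big /= mulr_sumr; apply: eq_bigr => v _.
by rewrite /ppr_avg /pprd -mulr_sumr mulrCA.
Qed.

End GFP.

Theorem lemma2 (R : realType) (V : finType) (E : rel V) (alpha : R)
  (I : finType) (F : I -> {set V}) (eps delta tau : R) :
  (forall v, ~~ E v v) ->
  (forall v, (0 < outdeg E v)%N) ->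
  0 < alpha < 1 ->
  (forall i, F i != finset.set0) ->
  (forall i j, i != j -> [disjoint F i & F j]) ->
  0 < eps -> 0 < delta -> 0 < tau ->
  let rmax := eps * delta / ((nedges E)%:R * tau) in
  forall i : I,
    gfp_terminates E alpha F rmax (gfp_init R E F i) /\
    (forall s, gfp_output E alpha F rmax i s ->
       forall j, spr E alpha F j <= tau ->
         ed_approx eps delta (s.1 j) (spprd E alpha F i j)).
Proof.
move=> loopfree outdeg_gt0 alpha01 F_neq0 _ eps_gt0 delta_gt0 tau_gt0 rmax i.
have m_gt0 : (0 < nedges E)%N.
  by have /set0Pn[v _] := F_neq0 i; exact: (nedges_gt0 v).
have rmax_gt0 : 0 < rmax by rewrite divr_gt0 ?mulr_gt0 ?ltr0n.
split.
  apply: gfp_terminates_residue_ge0 => //.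
  exact: (gfp_invariant_init (F:=F) i).1.
move=> s out j tau_j_le; apply: ed_approx_of_bounds; first exact: ltW.
have /andP[err_ge0 err_le] := gfp_output_error outdeg_gt0 alpha01 loopfree out j.
rewrite err_ge0 (le_trans err_le) // -nedges_mul_spr //.
have -> : rmax * ((nedges E)%:R * spr E alpha F j) =
    eps * delta * (spr E alpha F j / tau).
  by rewrite /rmax; field; rewrite gt_eqF ?pnatr_eq0 -?lt0n.
apply: ler_piMr; first by rewrite mulr_ge0 ?ltW.
by rewrite ler_pdivrMr // mul1r.
Qed.
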